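(* Let $\mathcal{N}$ be the association scheme generated by the Nauru graph $GP(12,5)$ (a rank-$7$ scheme), with distinguished relation $R_1$ the edge relation of $GP(12,5)$. Then every association scheme with a distinguished relation having the same relation-distribution diagram as $(\mathcal{N},R_1)$ is isomorphic to $\mathcal{N}$ (with the distinguished relation corresponding to $R_1$).
   Context: A (symmetric) association scheme with rank $d+1$ on a finite set $X$ is a partition $\mathcal{R}=\{R_0,\dots,R_d\}$ of $X\times X$ with $R_0$ the diagonal, each $R_i$ symmetric, and numbers $p^h_{ij}$ such that for every $(x,y)\in R_h$ the number of $z$ with $(x,z)\in R_i$, $(z,y)\in R_j$ equals $p^h_{ij}$; $k_i=p^0_{ii}$. The association scheme generated by a graph is the association scheme of minimal rank having the graph's edge relation as a relation. Two schemes with distinguished relations $R_1$, $R'_1$ have the same relation-distribution diagram if they have the same rank and there is a bijection $\sigma$ of the index set with $\sigma(0)=0$, $\sigma(1)=1$, $k_i=k'_{\sigma(i)}$ and $p^i_{1j}=p'^{\sigma(i)}_{1\sigma(j)}$ for all $i,j$. The generalized Petersen graph $GP(n,s)$ has vertices $i$ and $i^*$ for $i\in\mathbb{Z}_n$, with $i$ adjacent to $i\pm1$ and $i^*$, and $i^*$ adjacent to $(i\pm s)^*$. *)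

From mathcomp Require Import all_boot all_fingroup.
Set Implicit Arguments. Unset Strict Implicit. Unset Printing Implicit Defensive.

(* A symmetric association scheme of rank n.+1 on a finite set X is given by
   the relation-index function r : X -> X -> 'I_n.+1, where R_i = {(x,y) | r x y = i}. *)
Definition is_scheme (X : finType) (n : nat) (r : X -> X -> 'I_n.+1) : Prop :=
  [/\ (forall x y, (r x y == ord0) = (x == y)),
      (forall x y, r x y = r y x),
      (forall i, exists x y, r x y = i)
    & (forall x y x' y' i j, r x y = r x' y' ->
         #|[set z | (r x z == i) && (r z y == j)]|
         = #|[set z | (r x' z == i) && (r z y' == j)]|)].

(* The intersection number p^h_{ij} (computed at some pair in R_h; 0 if R_h is empty). *)
Definition pnum (X : finType) (n : nat) (r : X -> X -> 'I_n.+1) (h i j : 'I_n.+1) : nat :=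
  if [pick p : X * X | r p.1 p.2 == h] is Some p
  then #|[set z | (r p.1 z == i) && (r z p.2 == j)]|
  else 0.

Definition valency (X : finType) (n : nat) (r : X -> X -> 'I_n.+1) (i : 'I_n.+1) : nat :=
  pnum r ord0 i i.

Definition i1 {n : nat} : 'I_n.+2 := @Ordinal n.+2 1 isT.

Definition same_diagram (X Y : finType) (n : nat)
    (r : X -> X -> 'I_n.+2) (s : Y -> Y -> 'I_n.+2) : Prop :=
  exists sigma : {perm 'I_n.+2},
    [/\ sigma ord0 = ord0, sigma i1 = i1,
        (forall i, valency r i = valency s (sigma i))
      & (forall i j, pnum r i i1 j = pnum s (sigma i) i1 (sigma j))].

(* Generalized Petersen graph GP(n,s): vertex (false, i) is i, (true, i) is i^*. *)
Definition gp_adj (n s : nat) (u v : bool * 'I_n) : bool :=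
  match u, v with
  | (false, i), (false, j) => (val j == (i + 1) %% n) || (val i == (j + 1) %% n)
  | (true, i), (true, j) => (val j == (i + s) %% n) || (val i == (j + s) %% n)
  | (false, i), (true, j) => i == j
  | (true, i), (false, j) => i == j
  end.
Arguments gp_adj : clear implicits.

Definition scheme_iso (X Y : finType) (n : nat)
    (r : X -> X -> 'I_n.+2) (s : Y -> Y -> 'I_n.+2) : Prop :=
  exists f : X -> Y, bijective f /\
  exists sigma : {perm 'I_n.+2}, sigma i1 = i1 /\
    forall x y, s (f x) (f y) = sigma (r x y).

From mathcomp Require Import all_boot all_fingroup zify.
Set Implicit Arguments. Unset Strict Implicit. Unset Printing Implicit Defensive.

(* Minimality: in any scheme containing the edge relation of GP(12,5), the number of walks of
   length k from x to y depends only on the relation of (x, y), and for k < 5 these counts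
   already separate the seven relations of the explicit Nauru scheme [nauru].  So every such
   scheme refines [nauru], and the minimal one is [nauru] up to relabelling.

   Rigidity: let S be a scheme with the same relation-distribution diagram, which fixes
   p^h_{1j} and the valencies.  If the entries of a combination \sum_i c_i A_i of adjacency
   matrices of S agree with those of the Nauru scheme, so do those of A_1 (\sum_i c_i A_i);
   starting from A_0, A_1 and \sum_i A_i this determines every p^h_{ij} of S.  Then 24 points
   of S are built one neighbour at a time, and their mutual relations are forced by two rules
   (a triangle with sides h, i, j needs p^h_{ij} > 0, and the neighbours of p are distributed
   over their relations to q as p^{(p,q)}_{1j}), reproducing the relation table of [nauru].
   As S has 24 points, this is an isomorphism. *)

(** * Association schemes *)

Lemma sum_indicator_card (T : finType) (P : pred T) : \sum_z (P z : nat) = #|[set z | P z]|.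
Proof. by rewrite -sum1dep_card [RHS]big_mkcond; apply: eq_bigr => z _; case: (P z). Qed.

Lemma sum_delta (T : finType) (a : T) (F : T -> nat) : F a = \sum_l (a == l) * F l.
Proof.
rewrite (bigD1 a) //= eqxx mul1n big1 ?addn0 // => l /negbTE.
by rewrite eq_sym => ->.
Qed.

Lemma sum_by_fibres (T I : finType) (f : T -> I) (F : T -> nat) (phi : I -> nat) :
  \sum_z F z * phi (f z) = \sum_l phi l * \sum_z (f z == l) * F z.
Proof.
under eq_bigr => z _ do rewrite (sum_delta (f z) phi) big_distrr.
rewrite exchange_big /=; apply: eq_bigr => l _; rewrite big_distrr /=.
by apply: eq_bigr => z _; rewrite [LHS]mulnCA [RHS]mulnC -mulnA.
Qed.

Section SchemeFacts.
Variables (Y : finType) (n : nat) (s : Y -> Y -> 'I_n.+1).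
Hypothesis s_scheme : is_scheme s.

Definition paths2 (x y : Y) (i j : 'I_n.+1) : nat :=
  #|[set z | (s x z == i) && (s z y == j)]|.

Lemma paths2E x y i j : paths2 x y i j = \sum_z (s x z == i) * (s z y == j).
Proof. by rewrite /paths2 -sum_indicator_card; apply: eq_bigr => z _; rewrite mulnb. Qed.

Lemma pnumE x y i j : pnum s (s x y) i j = paths2 x y i j.
Proof.
case: s_scheme => _ _ _ pnum_ok; rewrite /pnum.
case: pickP => [[a b] /= /eqP Eab | /(_ (x, y))]; last by rewrite /= eqxx.
exact: pnum_ok.
Qed.

Lemma scheme_sym x y : s x y = s y x. Proof. by case: s_scheme. Qed.

Lemma scheme_eq0 x y : (s x y == ord0) = (x == y). Proof. by case: s_scheme. Qed.

Lemma scheme_refl x : s x x = ord0. Proof. by apply/eqP; rewrite scheme_eq0. Qed.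

Lemma valencyE x i : valency s i = #|[set z | s x z == i]|.
Proof.
rewrite /valency -(scheme_refl x) pnumE; apply: eq_card => z.
by rewrite !inE (scheme_sym z x) andbb.
Qed.

End SchemeFacts.

Section Relabel.
Variables (Y : finType) (n : nat).

Lemma eq_pnum (s s' : Y -> Y -> 'I_n.+1) : s =2 s' -> forall h i j, pnum s h i j = pnum s' h i j.
Proof.
move=> E h i j; rewrite /pnum.
rewrite (eq_pick (Q := fun p : Y * Y => s p.1 p.2 == h)) => [|p]; last by rewrite /= E.
by case: pickP => // p _; apply: eq_card => z; rewrite !inE !E.
Qed.

Lemma eq_valency (s s' : Y -> Y -> 'I_n.+1) : s =2 s' -> valency s =1 valency s'.
Proof. by move=> E i; rewrite /valency (eq_pnum E). Qed.

Variables (s : Y -> Y -> 'I_n.+1) (t : {perm 'I_n.+1}).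

Definition relabel (y y' : Y) : 'I_n.+1 := t (s y y').

Lemma pnum_relabel h i j : pnum relabel (t h) (t i) (t j) = pnum s h i j.
Proof.
rewrite /pnum (eq_pick (Q := fun p : Y * Y => s p.1 p.2 == h)) => [|p]; last first.
  by rewrite /relabel /= (inj_eq perm_inj).
by case: pickP => // p _; apply: eq_card => z; rewrite !inE /relabel !(inj_eq perm_inj).
Qed.

Lemma pnum_relabelE h i j : pnum relabel h i j = pnum s (t^-1 h)%g (t^-1 i)%g (t^-1 j)%g.
Proof. by rewrite -pnum_relabel !permKV. Qed.

Hypothesis t0 : t ord0 = ord0.

Lemma valency_relabel i : valency relabel (t i) = valency s i.
Proof. by rewrite /valency -{1}t0 pnum_relabel. Qed.

Lemma valency_relabelE i : valency relabel i = valency s (t^-1 i)%g.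
Proof. by rewrite -valency_relabel permKV. Qed.

Lemma scheme_relabel : is_scheme s -> is_scheme relabel.
Proof.
case=> s_diag s_sym s_onto s_pnum; split=> [x y|x y|i|x y x' y' i j].
- by rewrite /relabel -t0 (inj_eq perm_inj) s_diag.
- by rewrite /relabel s_sym.
- by have [x [y E]] := s_onto (t^-1 i)%g; exists x, y; rewrite /relabel E permKV.
- move=> /perm_inj /(s_pnum _ _ _ _ (t^-1 i)%g (t^-1 j)%g).
  have tE a b : #|[set z | (relabel a z == i) && (relabel z b == j)]| =
                #|[set z | (s a z == (t^-1 i)%g) && (s z b == (t^-1 j)%g)]|.
    apply: eq_card => z.
    by rewrite !inE /relabel -{1}(permKV t i) -{1}(permKV t j) !(inj_eq perm_inj).
  by rewrite !tE.
Qed.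

End Relabel.

Section RelabelDiagram.
Variables (X Y : finType) (n : nat) (r0 r : X -> X -> 'I_n.+2) (s : Y -> Y -> 'I_n.+2).
Variables (t : {perm 'I_n.+2}).
Hypotheses (t0 : t ord0 = ord0) (t1 : t i1 = i1) (rE : r =2 relabel r0 t).

Lemma same_diagram_relabel : same_diagram r s -> same_diagram r0 s.
Proof.
case=> sigma [sigma0 sigma1 val_eq pnum_eq]; exists (t * sigma)%g.
split=> [|||i j]; rewrite ?permM ?t0 ?t1 //.
- by move=> i; rewrite permM -val_eq (eq_valency rE) valency_relabel.
- by rewrite -pnum_eq (eq_pnum rE) -[in RHS]t1 pnum_relabel.
Qed.

Lemma scheme_iso_relabel : scheme_iso r0 s -> scheme_iso r s.
Proof.
case=> f [f_bij [sigma [sigma1 f_iso]]]; exists f; split => //.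
exists (t^-1 * sigma)%g; split=> [|x y]; first by rewrite permM -{1}t1 permK.
by rewrite f_iso rE permM /relabel permK.
Qed.

End RelabelDiagram.

(** * The Nauru scheme *)

Notation X := (bool * 'I_12)%type.

(* Relations between the vertices numbered by [vidx], and the intersection numbers
   [nauru_p h i j] = p^h_{ij}. *)
Definition nauru_table : seq (seq nat) := [::
  [:: 0; 1; 2; 4; 6; 4; 5; 4; 6; 4; 2; 1; 1; 2; 3; 5; 4; 2; 3; 2; 4; 5; 3; 2];
  [:: 1; 0; 1; 2; 4; 6; 4; 5; 4; 6; 4; 2; 2; 1; 2; 3; 5; 4; 2; 3; 2; 4; 5; 3];
  [:: 2; 1; 0; 1; 2; 4; 6; 4; 5; 4; 6; 4; 3; 2; 1; 2; 3; 5; 4; 2; 3; 2; 4; 5];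
  [:: 4; 2; 1; 0; 1; 2; 4; 6; 4; 5; 4; 6; 5; 3; 2; 1; 2; 3; 5; 4; 2; 3; 2; 4];
  [:: 6; 4; 2; 1; 0; 1; 2; 4; 6; 4; 5; 4; 4; 5; 3; 2; 1; 2; 3; 5; 4; 2; 3; 2];
  [:: 4; 6; 4; 2; 1; 0; 1; 2; 4; 6; 4; 5; 2; 4; 5; 3; 2; 1; 2; 3; 5; 4; 2; 3];
  [:: 5; 4; 6; 4; 2; 1; 0; 1; 2; 4; 6; 4; 3; 2; 4; 5; 3; 2; 1; 2; 3; 5; 4; 2];
  [:: 4; 5; 4; 6; 4; 2; 1; 0; 1; 2; 4; 6; 2; 3; 2; 4; 5; 3; 2; 1; 2; 3; 5; 4];
  [:: 6; 4; 5; 4; 6; 4; 2; 1; 0; 1; 2; 4; 4; 2; 3; 2; 4; 5; 3; 2; 1; 2; 3; 5];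
  [:: 4; 6; 4; 5; 4; 6; 4; 2; 1; 0; 1; 2; 5; 4; 2; 3; 2; 4; 5; 3; 2; 1; 2; 3];
  [:: 2; 4; 6; 4; 5; 4; 6; 4; 2; 1; 0; 1; 3; 5; 4; 2; 3; 2; 4; 5; 3; 2; 1; 2];
  [:: 1; 2; 4; 6; 4; 5; 4; 6; 4; 2; 1; 0; 2; 3; 5; 4; 2; 3; 2; 4; 5; 3; 2; 1];
  [:: 1; 2; 3; 5; 4; 2; 3; 2; 4; 5; 3; 2; 0; 4; 2; 4; 6; 1; 5; 1; 6; 4; 2; 4];
  [:: 2; 1; 2; 3; 5; 4; 2; 3; 2; 4; 5; 3; 4; 0; 4; 2; 4; 6; 1; 5; 1; 6; 4; 2];
  [:: 3; 2; 1; 2; 3; 5; 4; 2; 3; 2; 4; 5; 2; 4; 0; 4; 2; 4; 6; 1; 5; 1; 6; 4];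
  [:: 5; 3; 2; 1; 2; 3; 5; 4; 2; 3; 2; 4; 4; 2; 4; 0; 4; 2; 4; 6; 1; 5; 1; 6];
  [:: 4; 5; 3; 2; 1; 2; 3; 5; 4; 2; 3; 2; 6; 4; 2; 4; 0; 4; 2; 4; 6; 1; 5; 1];
  [:: 2; 4; 5; 3; 2; 1; 2; 3; 5; 4; 2; 3; 1; 6; 4; 2; 4; 0; 4; 2; 4; 6; 1; 5];
  [:: 3; 2; 4; 5; 3; 2; 1; 2; 3; 5; 4; 2; 5; 1; 6; 4; 2; 4; 0; 4; 2; 4; 6; 1];
  [:: 2; 3; 2; 4; 5; 3; 2; 1; 2; 3; 5; 4; 1; 5; 1; 6; 4; 2; 4; 0; 4; 2; 4; 6];
  [:: 4; 2; 3; 2; 4; 5; 3; 2; 1; 2; 3; 5; 6; 1; 5; 1; 6; 4; 2; 4; 0; 4; 2; 4];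
  [:: 5; 4; 2; 3; 2; 4; 5; 3; 2; 1; 2; 3; 4; 6; 1; 5; 1; 6; 4; 2; 4; 0; 4; 2];
  [:: 3; 5; 4; 2; 3; 2; 4; 5; 3; 2; 1; 2; 2; 4; 6; 1; 5; 1; 6; 4; 2; 4; 0; 4];
  [:: 2; 3; 5; 4; 2; 3; 2; 4; 5; 3; 2; 1; 4; 2; 4; 6; 1; 5; 1; 6; 4; 2; 4; 0]].
Definition nauru_pnum_table : seq (seq (seq nat)) := [::
  [:: [:: 1; 0; 0; 0; 0; 0; 0]; [:: 0; 3; 0; 0; 0; 0; 0]; [:: 0; 0; 6; 0; 0; 0; 0]; [:: 0; 0; 0; 3; 0; 0; 0];
      [:: 0; 0; 0; 0; 6; 0; 0]; [:: 0; 0; 0; 0; 0; 3; 0]; [:: 0; 0; 0; 0; 0; 0; 2]];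
  [:: [:: 0; 1; 0; 0; 0; 0; 0]; [:: 1; 0; 2; 0; 0; 0; 0]; [:: 0; 2; 0; 2; 2; 0; 0]; [:: 0; 0; 2; 0; 0; 1; 0];
      [:: 0; 0; 2; 0; 0; 2; 2]; [:: 0; 0; 0; 1; 2; 0; 0]; [:: 0; 0; 0; 0; 2; 0; 0]];
  [:: [:: 0; 0; 1; 0; 0; 0; 0]; [:: 0; 1; 0; 1; 1; 0; 0]; [:: 1; 0; 2; 0; 0; 2; 1]; [:: 0; 1; 0; 0; 2; 0; 0];
      [:: 0; 1; 0; 2; 3; 0; 0]; [:: 0; 0; 2; 0; 0; 0; 1]; [:: 0; 0; 1; 0; 0; 1; 0]];
  [:: [:: 0; 0; 0; 1; 0; 0; 0]; [:: 0; 0; 2; 0; 0; 1; 0]; [:: 0; 2; 0; 0; 4; 0; 0]; [:: 1; 0; 0; 0; 0; 0; 2];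
      [:: 0; 0; 4; 0; 0; 2; 0]; [:: 0; 1; 0; 0; 2; 0; 0]; [:: 0; 0; 0; 2; 0; 0; 0]];
  [:: [:: 0; 0; 0; 0; 1; 0; 0]; [:: 0; 0; 1; 0; 0; 1; 1]; [:: 0; 1; 0; 2; 3; 0; 0]; [:: 0; 0; 2; 0; 0; 1; 0];
      [:: 1; 0; 3; 0; 0; 1; 1]; [:: 0; 1; 0; 1; 1; 0; 0]; [:: 0; 1; 0; 0; 1; 0; 0]];
  [:: [:: 0; 0; 0; 0; 0; 1; 0]; [:: 0; 0; 0; 1; 2; 0; 0]; [:: 0; 0; 4; 0; 0; 0; 2]; [:: 0; 1; 0; 0; 2; 0; 0];
      [:: 0; 2; 0; 2; 2; 0; 0]; [:: 1; 0; 0; 0; 0; 2; 0]; [:: 0; 0; 2; 0; 0; 0; 0]];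
  [:: [:: 0; 0; 0; 0; 0; 0; 1]; [:: 0; 0; 0; 0; 3; 0; 0]; [:: 0; 0; 3; 0; 0; 3; 0]; [:: 0; 0; 0; 3; 0; 0; 0];
      [:: 0; 3; 0; 0; 3; 0; 0]; [:: 0; 0; 3; 0; 0; 0; 0]; [:: 1; 0; 0; 0; 0; 0; 1]]].
Definition nauru_rel (a b : nat) : nat := nth 0 (nth [::] nauru_table a) b.
Definition nauru_p (h i j : nat) : nat := nth 0 (nth [::] (nth [::] nauru_pnum_table h) i) j.

Definition vidx (x : X) : nat := (if x.1 then 12 else 0) + x.2.

Definition nauru (x y : X) : 'I_7 := inord (nauru_rel (vidx x) (vidx y)).

Definition gp_adj_idx (a b : nat) : bool :=
  if (a < 12) == (b < 12) then
    let s := if a < 12 then 1 else 5 in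
    (b %% 12 == (a %% 12 + s) %% 12) || (a %% 12 == (b %% 12 + s) %% 12)
  else a %% 12 == b %% 12.

Lemma gp_adjE x y : gp_adj 12 5 x y = gp_adj_idx (vidx x) (vidx y).
Proof.
have inner_mod k : k < 12 -> (12 + k) %% 12 = k by move=> k_lt; rewrite modnDl modn_small.
have inner_ge k : (12 + k < 12) = false by rewrite ltnNge leq_addr.
case: x y => [[] [i i_lt]] [[] [j j_lt]];
  by rewrite /gp_adj_idx /vidx /= ?add0n ?inner_mod ?inner_ge ?i_lt ?j_lt
             ?(modn_small i_lt) ?(modn_small j_lt).
Qed.

Lemma vidx_lt x : vidx x < 24.
Proof. by case: x => [[] [i i_lt]] /=; rewrite /vidx /=; lia. Qed.

Lemma vidx_inj : injective vidx.
Proof.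
move=> [[] [i i_lt]] [[] [j j_lt]]; rewrite /vidx /= => E; try lia.
all: by congr pair; apply: val_inj => /=; lia.
Qed.

Lemma vidx_onto c : c < 24 -> exists x, vidx x = c.
Proof.
move=> c_lt; case: (ltnP c 12) => [c_outer | c_inner]; first by exists (false, Ordinal c_outer).
have c_lt' : c - 12 < 12 by lia.
by exists (true, Ordinal c_lt'); rewrite /vidx /=; lia.
Qed.

Lemma card_vidx (q : pred nat) : #|[set z : X | q (vidx z)]| = count q (iota 0 24).
Proof.
have vidx_enum : perm_eq [seq vidx x | x <- enum {: X}] (iota 0 24).
  apply: uniq_perm; [by rewrite (map_inj_uniq vidx_inj) enum_uniq | exact: iota_uniq |].
  move=> c; rewrite mem_iota add0n; apply/mapP/idP => [[x _ ->] | /vidx_onto [x <-]].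
    exact: vidx_lt.
  by exists x; rewrite ?mem_enum.
rewrite -(seq.permP vidx_enum) count_map cardsE cardE.
by rewrite /enum_mem size_filter /= filter_predT.
Qed.

Definition all_below (m : nat) (P : nat -> bool) : bool := all P (iota 0 m).

Lemma all_belowP m P : all_below m P -> forall a, a < m -> P a.
Proof. by move=> /allP P_ok a a_lt; apply: P_ok; rewrite mem_iota. Qed.

Lemma all_below2P m k (P : nat -> nat -> bool) :
  all_below m (fun a => all_below k (P a)) -> forall a b, a < m -> b < k -> P a b.
Proof. by move=> P_ok a b a_lt; apply: all_belowP; apply: all_belowP P_ok _ a_lt. Qed.

Lemma nauru_table_ok : all_below 24 (fun a => all_below 24 (fun b =>
  [&& nauru_rel a b < 7, nauru_rel a b == nauru_rel b a, (nauru_rel a b == 0) == (a == b)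
    & (nauru_rel a b == 1) == gp_adj_idx a b])).
Proof. by vm_compute. Qed.

Lemma nauru_pnum_ok : all_below 24 (fun a => all_below 24 (fun b =>
  all_below 7 (fun i => all_below 7 (fun j =>
    count (fun c => (nauru_rel a c == i) && (nauru_rel c b == j)) (iota 0 24)
      == nauru_p (nauru_rel a b) i j)))).
Proof. by vm_compute. Qed.

Lemma nauru_onto : all_below 7 (fun i => has (fun b => nauru_rel 0 b == i) (iota 0 24)).
Proof. by vm_compute. Qed.

Lemma nauru_table_at x y :
  [&& nauru_rel (vidx x) (vidx y) < 7, nauru_rel (vidx x) (vidx y) == nauru_rel (vidx y) (vidx x),
      (nauru_rel (vidx x) (vidx y) == 0) == (vidx x == vidx y)
    & (nauru_rel (vidx x) (vidx y) == 1) == gp_adj_idx (vidx x) (vidx y)].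
Proof. exact: (all_below2P nauru_table_ok (vidx_lt x) (vidx_lt y)). Qed.

Lemma nauruE x y : nauru x y = nauru_rel (vidx x) (vidx y) :> nat.
Proof. by rewrite inordK //; case/and4P: (nauru_table_at x y). Qed.

Lemma paths2_nauru x y (i j : 'I_7) : paths2 nauru x y i j = nauru_p (nauru x y) i j.
Proof.
transitivity
  (count (fun c => (nauru_rel (vidx x) c == i) && (nauru_rel c (vidx y) == j)) (iota 0 24)).
  by rewrite -card_vidx; apply: eq_card => z; rewrite !inE -!val_eqE /= !nauruE.
rewrite nauruE; apply/eqP.
have := all_below2P nauru_pnum_ok (vidx_lt x) (vidx_lt y).
by move/all_below2P; apply.
Qed.

Lemma nauru_scheme : is_scheme nauru.
Proof.
split=> [x y | x y | i | x y x' y' i j E].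
- rewrite -val_eqE /= nauruE -(inj_eq vidx_inj).
  by case/and4P: (nauru_table_at x y) => _ _ /eqP.
- apply: val_inj; rewrite /= !nauruE.
  by case/and4P: (nauru_table_at x y) => _ /eqP.
- have /hasP [b b_in /eqP b_i] := all_belowP nauru_onto (ltn_ord i).
  rewrite mem_iota in b_in; have [y yb] := vidx_onto b_in; have [x x0] := vidx_onto (isT : 0 < 24).
  by exists x, y; apply: val_inj; rewrite /= nauruE x0 yb.
- by rewrite -!/(paths2 nauru _ _ _ _) !paths2_nauru E.
Qed.

Lemma nauru_edge x y : (nauru x y == i1) = gp_adj 12 5 x y.
Proof.
rewrite gp_adjE -val_eqE /= nauruE.
by case/and4P: (nauru_table_at x y) => _ _ _ /eqP.
Qed.

Lemma pnum_nauru (h i j : 'I_7) : pnum nauru h i j = nauru_p h i j.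
Proof.
case: nauru_scheme => _ _ onto _; have [x [y <-]] := onto h.
by rewrite (pnumE nauru_scheme) paths2_nauru.
Qed.

(** * The scheme generated by GP(12,5) *)

Section Walks.
Variables (T : finType) (adj : rel T).

Fixpoint walks (k : nat) (x y : T) : nat :=
  if k is k'.+1 then \sum_z adj x z * walks k' z y else x == y.

Variables (n : nat) (s : T -> T -> 'I_n.+1) (e : 'I_n.+1).

Fixpoint walks_class (k : nat) (h : 'I_n.+1) : nat :=
  if k is k'.+1 then \sum_l pnum s h e l * walks_class k' l else h == ord0.

Hypotheses (s_scheme : is_scheme s) (s_edge : forall x y, (s x y == e) = adj x y).

Lemma walks_classE k x y : walks k x y = walks_class k (s x y).
Proof.
elim: k x y => [|k IHk] x y /=; first by rewrite (scheme_eq0 s_scheme).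
under eq_bigr => z _ do rewrite IHk -s_edge (sum_delta (s z y) (walks_class k)) big_distrr.
rewrite exchange_big /=; apply: eq_bigr => l _.
under eq_bigr => z _ do rewrite mulnA.
by rewrite -big_distrl /= (pnumE s_scheme) paths2E.
Qed.

End Walks.

Definition sum_below (m : nat) (F : nat -> nat) : nat := sumn [seq F l | l <- iota 0 m].

Lemma sum_belowE m (F : nat -> nat) : \sum_(l < m) F l = sum_below m F.
Proof. by rewrite -(big_mkord xpredT F) /index_iota subn0 /sum_below sumnE big_map. Qed.

Fixpoint nauru_walks (k h : nat) : nat :=
  if k is k'.+1 then sum_below 7 (fun l => nauru_p h 1 l * nauru_walks k' l) else h == 0.

Lemma nauru_walksE k x y : walks (gp_adj 12 5) k x y = nauru_walks k (nauru x y).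
Proof.
rewrite (walks_classE nauru_scheme nauru_edge).
elim: k (nauru x y) => [|k IHk] h //=.
by rewrite -sum_belowE; apply: eq_bigr => l _; rewrite pnum_nauru IHk.
Qed.

Lemma nauru_walks_separate : all_below 7 (fun h => all_below 7 (fun h' =>
  all (fun k => nauru_walks k h == nauru_walks k h') (iota 0 5) ==> (h == h'))).
Proof. by vm_compute. Qed.

Lemma nauru_coarsest m (r : X -> X -> 'I_m.+1) (e : 'I_m.+1) :
  is_scheme r -> (forall x y, (r x y == e) = gp_adj 12 5 x y) ->
  forall x y x' y', r x y = r x' y' -> nauru x y = nauru x' y'.
Proof.
move=> r_scheme r_edge x y x' y' E; apply/eqP.
have /implyP := all_below2P nauru_walks_separate (ltn_ord (nauru x y)) (ltn_ord (nauru x' y')).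
apply; apply/allP => k _.
by rewrite -!nauru_walksE !(walks_classE r_scheme r_edge) E.
Qed.

Section GeneratedScheme.
Variables (m : nat) (r : X -> X -> 'I_m.+1) (e : 'I_m.+1).
Hypotheses (r_scheme : is_scheme r) (r_edge : forall x y, (r x y == e) = gp_adj 12 5 x y).

Definition nauru_class (i : 'I_m.+1) : 'I_7 :=
  if [pick p : X * X | r p.1 p.2 == i] is Some p then nauru p.1 p.2 else ord0.

Definition class_of_nauru (j : 'I_7) : 'I_m.+1 :=
  if [pick p : X * X | nauru p.1 p.2 == j] is Some p then r p.1 p.2 else ord0.

Lemma nauru_classE x y : nauru_class (r x y) = nauru x y.
Proof.
rewrite /nauru_class; case: pickP => [p /eqP E | /(_ (x, y))]; last by rewrite /= eqxx.
exact: nauru_coarsest r_scheme r_edge _ _ _ _ E.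
Qed.

Lemma class_of_nauruK : cancel class_of_nauru nauru_class.
Proof.
move=> j; rewrite /class_of_nauru; case: pickP => [p /eqP <- | no_pair].
  exact: nauru_classE.
case: nauru_scheme => _ _ onto _; have [x [y E]] := onto j.
by have := no_pair (x, y); rewrite /= E eqxx.
Qed.

Lemma generated_rank : 7 <= m.+1.
Proof. by have := leq_card _ (can_inj class_of_nauruK); rewrite !card_ord. Qed.

End GeneratedScheme.

Lemma generated_nauru (r : X -> X -> 'I_7) :
  is_scheme r -> (forall x y, (r x y == i1) = gp_adj 12 5 x y) ->
  exists t : {perm 'I_7}, [/\ t ord0 = ord0, t i1 = i1 & r =2 relabel nauru t].
Proof.
move=> r_scheme r_edge.
have classK := class_of_nauruK r_scheme r_edge.
have rE x y : r x y = class_of_nauru r (nauru x y).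
  have [g gK Kg] : bijective (class_of_nauru r).
    by apply: inj_card_bij; [exact: can_inj classK | rewrite !card_ord].
  have := nauru_classE r_scheme r_edge x y.
  by rewrite -{1}[r x y]Kg classK => <-; rewrite Kg.
exists (perm (can_inj classK)); split=> [||x y]; rewrite ?permE.
- by rewrite -[in LHS](scheme_refl nauru_scheme (false, ord0)) -rE (scheme_refl r_scheme).
- pose x : X := (false, ord0); pose y : X := (false, Ordinal (isT : 1 < 12)).
  have /eqP r_xy : r x y == i1 by rewrite r_edge.
  have /eqP n_xy : nauru x y == i1 by rewrite nauru_edge.
  by rewrite -n_xy -rE r_xy.
- by rewrite /relabel permE rE.
Qed.

(** * Intersection numbers from the diagram *)

Lemma nauru_pnum_assoc : all_below 7 (fun h => all_below 7 (fun i => all_below 7 (fun j =>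
  sum_below 7 (fun m => nauru_p h 1 m * nauru_p m i j)
    == sum_below 7 (fun l => nauru_p l 1 i * nauru_p h l j)))).
Proof. by vm_compute. Qed.

Lemma nauru_pnum0 : all_below 7 (fun h => all_below 7 (fun j => nauru_p h 0 j == (h == j))).
Proof. by vm_compute. Qed.

Lemma nauru_pnum_colsum :
  all_below 7 (fun h => all_below 7 (fun j =>
    sum_below 7 (fun i => nauru_p h i j) == nauru_p 0 j j)).
Proof. by vm_compute. Qed.

Section DiagramDeterminesPnum.
Variables (Y : finType) (S : Y -> Y -> 'I_7).
Hypotheses (S_scheme : is_scheme S) (S_pnum1 : forall h j : 'I_7, pnum S h i1 j = nauru_p h 1 j).
Hypothesis S_valency : forall i : 'I_7, valency S i = nauru_p 0 i i.

Lemma paths2_1 u v j : paths2 S u v i1 j = nauru_p (S u v) 1 j.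
Proof. by rewrite -(pnumE S_scheme) S_pnum1. Qed.

Lemma sum_nbr_class u v (phi : 'I_7 -> nat) :
  \sum_w (S u w == i1) * phi (S w v) = \sum_(m < 7) nauru_p (S u v) 1 m * phi m.
Proof.
under eq_bigr => w _ do rewrite (scheme_sym S_scheme w v).
rewrite sum_by_fibres; apply: eq_bigr => m _.
rewrite -paths2_1 paths2E mulnC; congr (_ * _); apply: eq_bigr => w _.
by rewrite mulnC (scheme_sym S_scheme w v).
Qed.

Lemma sum_nbr_paths2 u v i j :
  \sum_w (S u w == i1) * paths2 S w v i j = \sum_(l < 7) nauru_p l 1 i * paths2 S u v l j.
Proof.
under eq_bigr => w _ do rewrite paths2E big_distrr.
rewrite exchange_big /=.
transitivity (\sum_z (S z v == j) * nauru_p (S u z) 1 i).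
  apply: eq_bigr => z _; rewrite -paths2_1 paths2E big_distrr /=.
  by apply: eq_bigr => w _; rewrite mulnA mulnC.
rewrite (sum_by_fibres (S u) _ (fun l : 'I_7 => nauru_p l 1 i)).
apply: eq_bigr => l _; rewrite paths2E.
by congr (_ * _); apply: eq_bigr => z _.
Qed.

Definition npaths (u v : Y) (i : nat) (j : 'I_7) : nat := paths2 S u v (inord i) j.

(* A coefficient list c stands for \sum_i c_i A_i; [nbr_coefs c] stands for A_1 times it. *)
Definition known (c : seq nat) : Prop := forall u v (j : 'I_7),
  sum_below 7 (fun i => nth 0 c i * npaths u v i j)
  = sum_below 7 (fun i => nth 0 c i * nauru_p (S u v) i j).

Definition nbr_coefs (c : seq nat) : seq nat :=
  [seq sum_below 7 (fun i => nauru_p l 1 i * nth 0 c i) | l <- iota 0 7].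

Lemma sum_below_npaths (c : nat -> nat) u v j :
  sum_below 7 (fun i => c i * npaths u v i j) = \sum_(i < 7) c i * paths2 S u v i j.
Proof. by rewrite -sum_belowE; apply: eq_bigr => i _; rewrite /npaths inord_val. Qed.

Lemma known_succ c : known c -> known (nbr_coefs c).
Proof.
move=> known_c u v j.
have regroup (F : 'I_7 -> nat) : \sum_(l < 7) nth 0 (nbr_coefs c) l * F l
    = \sum_(i < 7) nth 0 c i * \sum_(l < 7) nauru_p l 1 i * F l.
  under eq_bigr => l _ do rewrite (nth_map 0) ?size_iota // nth_iota // -sum_belowE big_distrl.
  rewrite exchange_big; apply: eq_bigr => i _; rewrite big_distrr; apply: eq_bigr => l _ /=.
  by rewrite -mulnA mulnCA.
rewrite (sum_below_npaths (nth 0 (nbr_coefs c))) -sum_belowE !regroup.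
under eq_bigr => i _ do rewrite -sum_nbr_paths2 big_distrr.
rewrite exchange_big /=.
transitivity (\sum_w (S u w == i1) * \sum_(i < 7) nth 0 c i * nauru_p (S w v) i j).
  apply: eq_bigr => w _; under eq_bigr => i _ do rewrite mulnCA.
  by rewrite -big_distrr /= -(sum_below_npaths (nth 0 c)) known_c -sum_belowE.
have := sum_nbr_class u v (fun m => \sum_(i < 7) nth 0 c i * nauru_p m i j); rewrite /= => ->.
under eq_bigr => m _ do rewrite big_distrr.
rewrite exchange_big; apply: eq_bigr => i _ /=.
under eq_bigr => m _ do rewrite mulnCA.
rewrite -big_distrr /= (sum_belowE 7 (fun m => nauru_p (S u v) 1 m * nauru_p m i j)).
rewrite (sum_belowE 7 (fun l => nauru_p l 1 i * nauru_p (S u v) l j)); congr (_ * _); apply/eqP.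
have := all_below2P nauru_pnum_assoc (ltn_ord (S u v)) (ltn_ord i).
by move/all_belowP; apply.
Qed.

Lemma paths2_0 u v j : paths2 S u v ord0 j = (S u v == j).
Proof.
rewrite paths2E; under eq_bigr => z _ do rewrite (scheme_eq0 S_scheme).
by rewrite -(sum_delta u (fun z => (S z v == j) : nat)).
Qed.

Lemma known0 : known [:: 1; 0; 0; 0; 0; 0; 0].
Proof.
move=> u v j; rewrite /sum_below /= /npaths (inord_val ord0) paths2_0 !mul0n !addn0 !mul1n.
by apply/esym/eqP; exact: (all_below2P nauru_pnum0 (ltn_ord (S u v)) (ltn_ord j)).
Qed.

Lemma known1 : known [:: 0; 1; 0; 0; 0; 0; 0].
Proof. by move=> u v j; rewrite /sum_below /= /npaths (inord_val i1) paths2_1 !mul0n. Qed.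

Lemma known_all : known (nseq 7 1).
Proof.
move=> u v j.
have -> : sum_below 7 (fun i => nth 0 (nseq 7 1) i * nauru_p (S u v) i j) = nauru_p 0 j j.
  have /eqP <- := all_below2P nauru_pnum_colsum (ltn_ord (S u v)) (ltn_ord j).
  by rewrite /sum_below /= !mul1n.
rewrite sum_below_npaths.
transitivity (\sum_(i < 7) paths2 S u v i j).
  by apply: eq_bigr => i _; rewrite nth_nseq ltn_ord mul1n.
rewrite -S_valency (valencyE S_scheme v) -sum_indicator_card.
rewrite (eq_bigr (fun i : 'I_7 => \sum_z (S u z == i) * (S z v == j))) => [|i _]; last first.
  exact: paths2E.
rewrite exchange_big; apply: eq_bigr => z _ /=.
rewrite -big_distrl /= (scheme_sym S_scheme v z).
have -> : \sum_(i < 7) (S u z == i : nat) = 1.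
  by rewrite [RHS](sum_delta (S u z) (fun=> 1)); apply: eq_bigr => i _; rewrite muln1.
by rewrite mul1n.
Qed.

Lemma paths2_diagram u v (i j : 'I_7) : paths2 S u v i j = nauru_p (S u v) i j.
Proof.
have known2 : known [:: 0; 0; 1; 0; 0; 0; 0].
  have succ1 : known [:: 3; 0; 1; 0; 0; 0; 0] by exact: known_succ known1.
  move=> u' v' j'; move: (succ1 u' v' j') (known0 u' v' j'); rewrite /sum_below /=; lia.
have known34 : known [:: 0; 0; 0; 2; 1; 0; 0].
  have succ2 : known [:: 0; 2; 0; 2; 1; 0; 0] by exact: known_succ known2.
  move=> u' v' j'; move: (succ2 u' v' j') (known1 u' v' j'); rewrite /sum_below /=; lia.
have known56 : known [:: 0; 0; 0; 0; 0; 4; 3].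
  have succ34 : known [:: 0; 0; 3; 0; 0; 4; 3] by exact: known_succ known34.
  move=> u' v' j'; move: (succ34 u' v' j') (known2 u' v' j'); rewrite /sum_below /=; lia.
have known34' : known [:: 0; 0; 0; 4; 7; 0; 0] by exact: known_succ known56.
move: (known0 u v j) (known1 u v j) (known2 u v j) (known34 u v j) (known34' u v j).
move: (known56 u v j) (known_all u v j).
have -> : paths2 S u v i j = npaths u v i j by rewrite /npaths inord_val.
by case: i => [[|[|[|[|[|[|[|//]]]]]]] i_lt]; rewrite /sum_below /=; lia.
Qed.

End DiagramDeterminesPnum.

(** * Reconstruction *)

Lemma count_lt_in (T : eqType) (P Q : pred T) (s : seq T) :
  {in s, subpred P Q} -> (exists2 x, x \in s & Q x && ~~ P x) -> count P s < count Q s.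
Proof.
move=> PQ [x xs /andP [Qx nPx]].
rewrite -[count Q s]size_filter -(count_predC P) !count_filter.
rewrite (@eq_in_count _ (predI P Q) P) => [|y ys]; last by rewrite /= andb_idr //; exact: PQ.
by rewrite -[X in X < _]addn0 ltn_add2l -has_count; apply/hasP; exists x; rewrite //= nPx.
Qed.

Lemma foldl_preserve (A B : Type) (P : A -> Prop) (f : A -> B -> A) z s :
  P z -> (forall a b, P a -> P (f a b)) -> P (foldl f z s).
Proof. by move=> Pz Pf; elim: s z Pz => //= b s IH z Pz; apply/IH/Pf. Qed.

Lemma head_singleton (s : seq nat) x : size s == 1 -> x \in s -> head 0 s = x.
Proof. by case: s => [|y [|]] //= _; rewrite inE => /eqP. Qed.

Definition table := seq (seq nat).

(* Entries [< 7] of a partial relation table are known relations; the rest are unknown. *)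
Definition look (T : table) (a b : nat) : nat := nth 7 (nth [::] T a) b.

Definition upd (T : table) (a b v : nat) : table :=
  set_nth [::] T a (set_nth 7 (nth [::] T a) b v).

Definition upd2 (T : table) (a b v : nat) : table := upd (upd T a b v) b a v.

Lemma look_upd T a b v x y :
  look (upd T a b v) x y = if (x == a) && (y == b) then v else look T x y.
Proof.
rewrite /look /upd nth_set_nth /=; case: eqP => [->|] //=.
by rewrite nth_set_nth /=; case: eqP.
Qed.

(* Triangle rule: the relation k of (i, j) satisfies p^{(a,j)}_{(a,i) k} > 0 for every a. *)
Definition pair_candidates (T : table) (i j : nat) : seq nat :=
  [seq k <- iota 0 7 | all (fun a => (look T a i < 7) && (look T a j < 7) ==>
                                      (0 < nauru_p (look T a j) (look T a i) k)) (iota 0 24)].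

Definition infer_pair (i j : nat) (T : table) : table :=
  if (7 <= look T i j) && (size (pair_candidates T i j) == 1)
  then upd2 T i j (head 0 (pair_candidates T i j)) else T.

Definition nbrs (T : table) (p : nat) : seq nat := [seq n <- iota 0 24 | look T p n == 1].

Definition separated (T : table) (ns : seq nat) : bool :=
  all (fun a => all (fun b => (a == b) || (0 < look T a b < 7)) ns) ns.

(* Counting rule: the relations to q of the neighbours of p are distributed as p^{(p,q)}_{1j};
   when a single value j still has room, every unknown neighbour takes it. *)
Definition count_values (T : table) (p q : nat) : seq nat :=
  [seq j <- iota 0 7 | count (fun n => look T n q == j) (nbrs T p) < nauru_p (look T p q) 1 j].

Definition infer_count (p q : nat) (T : table) : table :=
  let unk := [seq n <- nbrs T p | 7 <= look T n q] in
  if [&& look T p q < 7, separated T (nbrs T p), unk != [::]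
       & size (count_values T p q) == 1]
  then let v := head 0 (count_values T p q) in foldl (fun T' n => upd2 T' n q v) T unk
  else T.

Definition sweep (T : table) : table :=
  let pairs := [seq (a, b) | a <- iota 0 24, b <- iota 0 24] in
  foldl (fun T ab => infer_pair ab.1 ab.2 T)
    (foldl (fun T ab => infer_count ab.1 ab.2 T) T pairs) pairs.

Definition add_node (k : nat) (c : nat * nat * nat) (T : table) : table :=
  let: (p, g, l) := c in
  foldl (fun T j => infer_pair k j T) (upd2 (upd2 (upd2 T k k 0) k p 1) k g l) (iota 0 k).

Definition node_ok (k : nat) (c : nat * nat * nat) (T : table) : bool :=
  let: (p, g, l) := c in [&& p < k, g < k, l < 7, look T p g < 7 & 0 < nauru_p (look T p g) 1 l].

Fixpoint build (k : nat) (spec : seq (nat * nat * nat)) (T : table) : option table :=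
  if spec is c :: spec' then
    if node_ok k c T then build k.+1 spec' (add_node k c T) else None
  else Some T.

(* Point k + 1 is a neighbour of point p in relation l with point g; point k becomes the
   vertex with [vidx] k. *)
Definition nauru_spec : seq (nat * nat * nat) :=
  [:: (0, 0, 1); (1, 0, 2); (2, 0, 4); (3, 0, 6); (4, 1, 6); (5, 0, 5); (6, 1, 5); (7, 5, 4);
      (8, 1, 6); (9, 0, 2); (10, 0, 1); (0, 2, 3); (1, 3, 3); (2, 0, 3); (3, 0, 5); (4, 1, 5);
      (5, 0, 2); (6, 0, 3); (7, 1, 3); (8, 1, 2); (9, 0, 5); (10, 0, 3); (11, 1, 3)].

Definition matches_nauru (T : table) : bool :=
  all_below 24 (fun a => all_below 24 (fun b => look T a b == nauru_rel a b)).

Definition rebuilds_nauru (spec : seq (nat * nat * nat)) : bool :=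
  if build 1 spec [:: [:: 0]] is Some T then matches_nauru (iter 4 sweep T) else false.

Lemma nauru_spec_ok : rebuilds_nauru nauru_spec.
Proof. by vm_compute. Qed.

Lemma matches_nauruP T :
  matches_nauru T -> forall a b, a < 24 -> b < 24 -> look T a b = nauru_rel a b.
Proof. by move=> T_ok a b a_lt b_lt; apply/eqP; exact: (all_below2P T_ok a_lt b_lt). Qed.

Lemma rebuilds_nauruP spec : rebuilds_nauru spec ->
  exists2 T, build 1 spec [:: [:: 0]] = Some T & matches_nauru (iter 4 sweep T).
Proof. by rewrite /rebuilds_nauru; case: build => // T; exists T. Qed.

Section Reconstruction.
Variables (Y : finType) (S : Y -> Y -> 'I_7).
Hypothesis S_scheme : is_scheme S.
Hypothesis S_paths2 : forall u v i j, paths2 S u v i j = nauru_p (S u v) i j.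

Definition consistent (env : nat -> Y) (T : table) : Prop :=
  forall a b, look T a b < 7 -> S (env a) (env b) = look T a b :> nat.

Section Consistency.
Variable env : nat -> Y.

Lemma consistent_upd2 T a b v :
  consistent env T -> S (env a) (env b) = v :> nat -> consistent env (upd2 T a b v).
Proof.
move=> T_ok Sab x y; rewrite /upd2 !look_upd.
case: andP => [[/eqP -> /eqP ->] _|_]; first by rewrite (scheme_sym S_scheme).
by case: andP => [[/eqP -> /eqP ->] _|_]; last exact: T_ok.
Qed.

Lemma consistent_root : S (env 0) (env 0) = 0 :> nat -> consistent env [:: [:: 0]].
Proof. by move=> S00 [|a] [|b] //; rewrite /look /= ?nth_nil. Qed.

Lemma relation_candidate T i j : consistent env T ->
  nat_of_ord (S (env i) (env j)) \in pair_candidates T i j.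
Proof.
move=> T_ok; rewrite mem_filter mem_iota add0n ltn_ord andbT leq0n andbT.
apply/allP => a _.
apply/implyP => /andP [/T_ok <- /T_ok <-].
rewrite -S_paths2 lt0n cards_eq0; apply/set0Pn; exists (env i).
by rewrite !inE !eqxx.
Qed.

Lemma consistent_infer_pair i j T : consistent env T -> consistent env (infer_pair i j T).
Proof.
move=> T_ok; rewrite /infer_pair; case: andP => // [[_ single]].
by apply: consistent_upd2 => //; rewrite (head_singleton single (relation_candidate _ _ T_ok)).
Qed.

Lemma separated_inj T ns : consistent env T -> separated T ns -> {in ns &, injective env}.
Proof.
move=> T_ok /allP sep a b a_in b_in E; have /allP/(_ b b_in) := sep a a_in.
case/orP => [/eqP // | /andP [ab_pos /T_ok ab_rel]].
by move: ab_pos; rewrite -ab_rel E (scheme_refl S_scheme).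
Qed.

Lemma count_nbrs_le T p q (j : 'I_7) : consistent env T -> separated T (nbrs T p) ->
  count (fun n => S (env n) (env q) == j) (nbrs T p) <= nauru_p (S (env p) (env q)) 1 j.
Proof.
move=> T_ok sep; rewrite -(S_paths2 _ _ i1) /paths2 -size_filter.
apply/card_geqP; exists [seq env n | n <- [seq n <- nbrs T p | S (env n) (env q) == j]].
split; first by rewrite (map_inj_in_uniq (sub_in2 _ (separated_inj T_ok sep))) ?filter_uniq
  ?iota_uniq // => n; rewrite mem_filter => /andP [].
  by rewrite size_map.
move=> z /mapP [n]; rewrite !mem_filter => /andP [Snq /andP [/eqP pn _]] ->.
by rewrite inE Snq andbT -val_eqE /= T_ok pn.
Qed.

Lemma relation_count_value T p q n : consistent env T -> look T p q < 7 ->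
  separated T (nbrs T p) -> n \in nbrs T p -> 7 <= look T n q ->
  nat_of_ord (S (env n) (env q)) \in count_values T p q.
Proof.
move=> T_ok pq_known sep n_nbr nq_unknown.
rewrite mem_filter mem_iota add0n ltn_ord leq0n !andbT -(T_ok _ _ pq_known).
apply: leq_trans (count_nbrs_le _ _ T_ok sep); apply: count_lt_in => [m _ /eqP mq | ].
  by apply/eqP/val_inj; rewrite /= T_ok ?mq.
exists n => //; rewrite eqxx /=; apply: contraTneq nq_unknown => ->.
by rewrite -leqNgt -ltnS ltn_ord.
Qed.

Lemma consistent_foldl_upd2 q v (l : seq nat) T : consistent env T ->
  (forall n, n \in l -> S (env n) (env q) = v :> nat) ->
  consistent env (foldl (fun T' n => upd2 T' n q v) T l).
Proof.
elim: l T => //= n l IH T T_ok l_rel; apply: IH => [|m m_in].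
  by apply: consistent_upd2 => //; apply: l_rel; rewrite mem_head.
by apply: l_rel; rewrite inE m_in orbT.
Qed.

Lemma consistent_infer_count p q T : consistent env T -> consistent env (infer_count p q T).
Proof.
move=> T_ok; rewrite /infer_count; case: and4P => // [[pq_known sep _ single]].
set v := head 0 _; set unk := filter _ _.
have unk_rel n : n \in unk -> S (env n) (env q) = v :> nat.
  rewrite mem_filter => /andP [nq_unknown n_nbr]; apply/esym/head_singleton => //.
  exact: relation_count_value.
exact: consistent_foldl_upd2.
Qed.

Lemma consistent_sweep T : consistent env T -> consistent env (sweep T).
Proof.
move=> T_ok; apply: foldl_preserve => [|T' ab]; last exact: consistent_infer_pair.
by apply: foldl_preserve => // T' ab; apply: consistent_infer_count.
Qed.

Lemma consistent_nauru T : consistent env T ->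
  (forall a b, a < 24 -> b < 24 -> look T a b = nauru_rel a b) ->
  forall x y, S (env (vidx x)) (env (vidx y)) = nauru x y.
Proof.
move=> T_ok T_nauru x y; have T_xy := T_nauru _ _ (vidx_lt x) (vidx_lt y).
apply: val_inj; rewrite /= nauruE -T_xy T_ok // T_xy.
by case/and4P: (nauru_table_at x y).
Qed.

End Consistency.

Definition child (u v : Y) (l : nat) : Y :=
  odflt u [pick z | (S u z == 1 :> nat) && (S z v == l :> nat)].

Lemma child_rel u v l : l < 7 -> 0 < nauru_p (S u v) 1 l ->
  S u (child u v l) = 1 :> nat /\ S (child u v l) v = l :> nat.
Proof.
move=> l_lt; rewrite -(S_paths2 _ _ i1 (Ordinal l_lt)) lt0n cards_eq0 => /set0Pn [z].
rewrite inE /child; case: pickP => [w /andP [/eqP -> /eqP ->] // | no_child].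
by have := no_child z; rewrite -!val_eqE /= => ->.
Qed.

Section Growth.
Variable y0 : Y.

Definition grow (es : seq Y) (c : nat * nat * nat) : seq Y :=
  rcons es (child (nth y0 es c.1.1) (nth y0 es c.1.2) c.2).

Definition node (spec : seq (nat * nat * nat)) (a : nat) : Y :=
  nth y0 (foldl grow [:: y0] spec) a.

Lemma size_nodes s : size (foldl grow [:: y0] s) = (size s).+1.
Proof.
by elim/last_ind: s => // s c IH; rewrite -cats1 foldl_cat /= size_rcons IH size_cat addn1.
Qed.

Lemma node_prefix s1 s2 a : a <= size s1 -> node (s1 ++ s2) a = node s1 a.
Proof.
have grow_ext es s : exists tail, foldl grow es s = es ++ tail.
  elim: s es => [|c s IH] es /=; first by exists [::]; rewrite cats0.
  have [tail ->] := IH (grow es c).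
  by exists (child (nth y0 es c.1.1) (nth y0 es c.1.2) c.2 :: tail); rewrite cat_rcons.
rewrite /node foldl_cat => a_le; have [tail ->] := grow_ext (foldl grow [:: y0] s1) s2.
by rewrite nth_cat size_nodes ltnS a_le.
Qed.

Lemma node_last s c : node (rcons s c) (size s).+1 = child (node s c.1.1) (node s c.1.2) c.2.
Proof. by rewrite /node -cats1 foldl_cat /= /grow nth_rcons size_nodes ltnn eqxx. Qed.

Lemma consistent_build spec s1 s2 T T' : spec = s1 ++ s2 -> consistent (node spec) T ->
  build (size s1).+1 s2 T = Some T' -> consistent (node spec) T'.
Proof.
elim: s2 s1 T => [|c s2 IH] s1 T spec_eq T_ok /=; first by case=> <-.
case: ifP => // c_ok; rewrite -(size_rcons s1 c); apply: IH; first by rewrite cat_rcons.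
case: c c_ok spec_eq => [[p g] l] /and5P [p_lt g_lt l_lt pg_known pg_pos] spec_eq.
have node_old a : a < (size s1).+1 -> node spec a = node s1 a.
  by move=> a_lt; rewrite spec_eq node_prefix.
have node_new : node spec (size s1).+1 = child (node spec p) (node spec g) l.
  rewrite (node_old p) // (node_old g) // -[l]/(p, g, l).2 -(node_last s1 (p, g, l)).
  by rewrite spec_eq -cat_rcons node_prefix // size_rcons.
have [new_p new_g] : S (node spec p) (node spec (size s1).+1) = 1 :> nat /\
                     S (node spec (size s1).+1) (node spec g) = l :> nat.
  by rewrite node_new; apply: child_rel; rewrite // (T_ok _ _ pg_known).
apply: foldl_preserve => [|T'' j]; last exact: consistent_infer_pair.
rewrite size_rcons; apply: (consistent_upd2 _ new_g).
apply: consistent_upd2; last by rewrite (scheme_sym S_scheme).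
by apply: consistent_upd2; rewrite ?(scheme_refl S_scheme).
Qed.

Lemma nauru_embedding : exists f : X -> Y, forall x y, S (f x) (f y) = nauru x y.
Proof.
have [T built /matches_nauruP T_nauru] := rebuilds_nauruP nauru_spec_ok.
pose env := node nauru_spec.
have root_ok : consistent env [:: [:: 0]].
  by apply: consistent_root; rewrite (scheme_refl S_scheme).
have T_ok : consistent env T.
  exact: (consistent_build (s1 := [::]) (erefl nauru_spec) root_ok built).
have sweep_ok : consistent env (iter 4 sweep T).
  by elim: 4 => [|k IH]; [exact: T_ok | exact: consistent_sweep].
by exists (fun x => env (vidx x)); exact: consistent_nauru sweep_ok T_nauru.
Qed.

End Growth.

Lemma card_scheme (y0 : Y) : #|Y| = \sum_(i < 7) valency S i.
Proof.
rewrite -sum1_card (eq_bigr (fun z => \sum_(i < 7) (S y0 z == i) * 1)) => [|z _]; last first.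
  exact: sum_delta (S y0 z) (fun=> 1).
rewrite exchange_big; apply: eq_bigr => i _ /=.
by rewrite (valencyE S_scheme y0) -sum_indicator_card; apply: eq_bigr => z _; rewrite muln1.
Qed.

End Reconstruction.

Theorem nauru_diagram_rigid (Y : finType) (s : Y -> Y -> 'I_7) :
  is_scheme s -> same_diagram nauru s -> scheme_iso nauru s.
Proof.
move=> s_scheme [sigma [sigma0 sigma1 val_eq pnum_eq]].
have sigmaV0 : (sigma^-1)%g ord0 = ord0 by rewrite -{1}sigma0 permK.
pose S := relabel s (sigma^-1)%g.
have S_scheme : is_scheme S by apply: scheme_relabel.
have S_pnum1 h j : pnum S h i1 j = nauru_p h 1 j.
  by rewrite /S pnum_relabelE !invgK sigma1 -pnum_eq pnum_nauru.
have S_val i : valency S i = nauru_p 0 i i.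
  by rewrite /S valency_relabelE // invgK -val_eq /valency pnum_nauru.
have S_paths2 := paths2_diagram S_scheme S_pnum1 S_val.
case: (s_scheme) => _ _ s_onto _; have [y0 _] := s_onto ord0.
have [f f_rel] := nauru_embedding S_scheme S_paths2 y0.
exists f; split; last first.
  by exists sigma; split => // x y; rewrite -f_rel /S /relabel permKV.
apply: inj_card_bij => [x y fxy|].
  by apply/eqP; rewrite -(scheme_eq0 nauru_scheme) -f_rel fxy (scheme_refl S_scheme).
rewrite (card_scheme S_scheme y0) card_prod card_bool card_ord.
by rewrite (eq_bigr (fun i : 'I_7 => nauru_p 0 i i)) // (sum_belowE 7 (fun i => nauru_p 0 i i)).
Qed.

Theorem proposition3p3 (n : nat) (r : bool * 'I_12 -> bool * 'I_12 -> 'I_n.+2) :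
  is_scheme r ->
  (forall x y, (r x y == i1) = gp_adj 12 5 x y) ->
  (forall (m : nat) (r' : bool * 'I_12 -> bool * 'I_12 -> 'I_m.+2),
      is_scheme r' -> (exists i, forall x y, (r' x y == i) = gp_adj 12 5 x y) ->
      n <= m) ->
  forall (Y : finType) (s : Y -> Y -> 'I_n.+2),
    is_scheme s -> same_diagram r s -> scheme_iso r s.
Proof.
move=> r_scheme r_edge r_minimal Y s s_scheme r_s.
have n_le : n <= 5.
  by apply: r_minimal nauru_scheme _; exists i1; exact: nauru_edge.
have n_ge := generated_rank r_scheme r_edge.
have n5 : n = 5 by lia.
subst n; have [t [t0 t1 rE]] := generated_nauru r_scheme r_edge.
apply: (scheme_iso_relabel t1 rE); apply: (nauru_diagram_rigid s_scheme).
exact: same_diagram_relabel t0 t1 rE r_s.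
Qed.
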